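(* Let $S$ be an AG-groupoid with a left identity, let $T$ be a left ideal of $S$ and let $B$ be a bi-ideal of $S$. Then $BT$ and $T^{2}B$ are bi-ideals of $S$.
   Context: An AG-groupoid (Abel-Grassmann's groupoid) is a set $S$ with a binary operation (written as juxtaposition) satisfying the left invertive law $(ab)c=(cb)a$ for all $a,b,c\in S$. A left identity is an element $e\in S$ with $ea=a$ for all $a\in S$. For nonempty subsets $A,B\subseteq S$, $AB=\{ab: a\in A, b\in B\}$ and $A^{2}=AA$. A left ideal is a nonempty subset $I$ with $SI\subseteq I$. A bi-ideal of $S$ is a nonempty subset $B$ with $BB\subseteq B$ (i.e. a sub-AG-groupoid) and $(BS)B\subseteq B$. *)

Set Implicit Arguments.

Definition left_invertive (S : Type) (mul : S -> S -> S) : Prop :=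
  forall a b c : S, mul (mul a b) c = mul (mul c b) a.

Definition is_left_identity (S : Type) (mul : S -> S -> S) (e : S) : Prop :=
  forall a : S, mul e a = a.

Definition setmul (S : Type) (mul : S -> S -> S) (A B : S -> Prop) : S -> Prop :=
  fun x => exists a b, A a /\ B b /\ x = mul a b.

Definition nonempty (S : Type) (A : S -> Prop) : Prop := exists x, A x.

Definition subset (S : Type) (A B : S -> Prop) : Prop := forall x, A x -> B x.

Definition full (S : Type) : S -> Prop := fun _ => True.

Definition left_ideal (S : Type) (mul : S -> S -> S) (I : S -> Prop) : Prop :=
  nonempty I /\ subset (setmul mul (@full S) I) I.

Definition bi_ideal (S : Type) (mul : S -> S -> S) (B : S -> Prop) : Prop :=
  nonempty B /\ subset (setmul mul B B) B /\
  subset (setmul mul (setmul mul B (@full S)) B) B.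


(* Everything rests on two identities of AG-groupoids:
   - the medial law (ab)(cd) = (ac)(bd), valid in every AG-groupoid;
   - with a left identity e, the left swap a(bc) = b(ac) and the rotation
     ((ac)b)s = b((sa)c), both obtained by inserting e and using the medial
     and left invertive laws.
   After recasting left ideals and bi-ideals as closure properties of
   elements, we show:
   - BT is a bi-ideal: by the medial law (b1 t1)(b2 t2) = (b1 b2)(t1 t2) and
     ((b1 t1) s)(b2 t2) = ((b1 t1) b2)(s t2); no left identity is needed;
   - T^2 B is a bi-ideal: the medial law handles products, and for the
     sandwich the rotation rewrites ((t1 t2) b1) s as b1 y, after which the
     left swap gives (b1 y)((t3 t4) b2) = (t3 t4)((b1 y) b2). *)

Section AGGroupoid.

Variable S : Type.
Variable mul : S -> S -> S.
Hypothesis hAG : left_invertive mul.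

Local Infix "⋅" := mul (at level 40, left associativity).

Lemma medial (a b c d : S) : (a ⋅ b) ⋅ (c ⋅ d) = (a ⋅ c) ⋅ (b ⋅ d).
Proof. rewrite hAG, (hAG c d b), <- hAG; reflexivity. Qed.

Section LeftIdentity.

Variable e : S.
Hypothesis he : is_left_identity mul e.

Lemma left_swap (a b c : S) : a ⋅ (b ⋅ c) = b ⋅ (a ⋅ c).
Proof.
  transitivity ((e ⋅ a) ⋅ (b ⋅ c)); [rewrite he; reflexivity |].
  rewrite medial, he. reflexivity.
Qed.

Lemma rotate (a b c s : S) : ((a ⋅ c) ⋅ b) ⋅ s = b ⋅ ((s ⋅ a) ⋅ c).
Proof. rewrite (hAG a c b), (hAG (b ⋅ c) a s), left_swap. reflexivity. Qed.

End LeftIdentity.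

Lemma setmul_intro (A C : S -> Prop) (a c : S) :
  A a -> C c -> setmul mul A C (a ⋅ c).
Proof. intros Ha Hc. exists a, c. auto. Qed.

Lemma left_ideal_mul (T : S -> Prop) (s t : S) :
  left_ideal mul T -> T t -> T (s ⋅ t).
Proof. intros [_ HT] Ht. apply HT, setmul_intro; [exact I | exact Ht]. Qed.

Lemma bi_ideal_mul (B : S -> Prop) (x y : S) :
  bi_ideal mul B -> B x -> B y -> B (x ⋅ y).
Proof. intros [_ [HBB _]] Hx Hy. apply HBB, setmul_intro; assumption. Qed.

Lemma bi_ideal_sandwich (B : S -> Prop) (x s y : S) :
  bi_ideal mul B -> B x -> B y -> B ((x ⋅ s) ⋅ y).
Proof.
  intros [_ [_ HBSB]] Hx Hy.
  apply HBSB, setmul_intro; [apply setmul_intro; [exact Hx | exact I] | exact Hy].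
Qed.

Lemma bi_ideal_intro (B : S -> Prop) :
  nonempty B ->
  (forall x y, B x -> B y -> B (x ⋅ y)) ->
  (forall x s y, B x -> B y -> B ((x ⋅ s) ⋅ y)) ->
  bi_ideal mul B.
Proof.
  intros Hne HBB HBSB. split; [exact Hne | split].
  - intros z [x [y [Hx [Hy ->]]]]. auto.
  - intros z [xs [y [[x [s [Hx [_ ->]]]] [Hy ->]]]]. auto.
Qed.

Lemma bi_ideal_mul_left_ideal (T B : S -> Prop) :
  left_ideal mul T -> bi_ideal mul B -> bi_ideal mul (setmul mul B T).
Proof.
  intros hT hB. pose proof hT as [[t0 Ht0] _]. pose proof hB as [[b0 Hb0] _].
  apply bi_ideal_intro.
  - exists (b0 ⋅ t0). apply setmul_intro; assumption.
  - intros x y [b1 [t1 [Hb1 [Ht1 ->]]]] [b2 [t2 [Hb2 [Ht2 ->]]]].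
    rewrite medial. apply setmul_intro.
    + apply bi_ideal_mul; assumption.
    + apply left_ideal_mul; assumption.
  - intros x s y [b1 [t1 [Hb1 [Ht1 ->]]]] [b2 [t2 [Hb2 [Ht2 ->]]]].
    rewrite medial. apply setmul_intro.
    + apply bi_ideal_sandwich; assumption.
    + apply left_ideal_mul; assumption.
Qed.

Lemma bi_ideal_square_left_ideal_mul (e : S) (T B : S -> Prop) :
  is_left_identity mul e -> left_ideal mul T -> bi_ideal mul B ->
  bi_ideal mul (setmul mul (setmul mul T T) B).
Proof.
  intros he hT hB. pose proof hT as [[t0 Ht0] _]. pose proof hB as [[b0 Hb0] _].
  apply bi_ideal_intro.
  - exists ((t0 ⋅ t0) ⋅ b0). repeat apply setmul_intro; assumption.
  - intros x y [u1 [b1 [[t1 [t2 [Ht1 [Ht2 ->]]]] [Hb1 ->]]]]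
      [u2 [b2 [[t3 [t4 [Ht3 [Ht4 ->]]]] [Hb2 ->]]]].
    rewrite medial. apply setmul_intro.
    + apply setmul_intro; apply left_ideal_mul; assumption.
    + apply bi_ideal_mul; assumption.
  - intros x s y [u1 [b1 [[t1 [t2 [Ht1 [Ht2 ->]]]] [Hb1 ->]]]]
      [u2 [b2 [[t3 [t4 [Ht3 [Ht4 ->]]]] [Hb2 ->]]]].
    rewrite (rotate e he t1 b1 t2 s), (left_swap e he _ (t3 ⋅ t4) b2).
    apply setmul_intro.
    + apply setmul_intro; assumption.
    + apply bi_ideal_sandwich; assumption.
Qed.

End AGGroupoid.

Theorem proposition1 (S : Type) (mul : S -> S -> S) (e : S)
  (hAG : left_invertive mul) (he : is_left_identity mul e)
  (T B : S -> Prop) (hT : left_ideal mul T) (hB : bi_ideal mul B) :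
  bi_ideal mul (setmul mul B T) /\
  bi_ideal mul (setmul mul (setmul mul T T) B).
Proof.
  split.
  - exact (bi_ideal_mul_left_ideal S mul hAG T B hT hB).
  - exact (bi_ideal_square_left_ideal_mul S mul hAG e T B he hT hB).
Qed.
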